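(* Assume (a), (b) (for every dataset $z$), (d) and (e) for the algorithm $P^{(Q,\lambda)}_{\Theta|Z}$. Then $$\bar{\bar G}\big(P^{(Q,\lambda)}_{\Theta|Z},P_Z\big)=\lambda\int\Big(\int\dot f\Big(\frac{dP^{(Q,\lambda)}_{\Theta|Z=z}}{dQ}(\theta)\Big)dP^{(Q,\lambda)}_{\Theta|Z=z}(\theta)-\int\dot f\Big(\frac{dP^{(Q,\lambda)}_{\Theta|Z=z}}{dQ}(\theta)\Big)dP^{(Q,\lambda)}_{\Theta}(\theta)\Big)dP_Z(z).$$
   Context: Setting. - $\mathcal{M}\subseteq\mathbb{R}^d$; $h:\mathcal{M}\times\mathcal{X}\to\mathcal{Y}$; the loss $\ell:\mathcal{Y}\times\mathcal{Y}\to[0,\infty)$ satisfies $\ell(y,y)=0$. - For a dataset $z\in(\mathcal{X}\times\mathcal{Y})^n$, $L_z(\theta)=\frac1n\sum_i\ell(h(\theta,x_i),y_i)$ and $R_z(P)=\int L_z\,dP$. - $Q$ is a Borel probability measure on $\mathcal{M}$, and $\triangle_Q(\mathcal{M})$ is the set of probability measures $P\ll Q$. Fix $\lambda>0$. - $f:[0,\infty)\to\mathbb{R}$ is convex with $f(1)=0$; $D_f(P\|Q)=\int f(\frac{dP}{dQ})dQ$. - $\dot f$ is the derivative of $f$ on $(0,\infty)$ and $\dot f^{-1}$ its inverse. Assumptions. - (a) $f$ is strictly convex and differentiable. - (b) For the given $z$, there exists $\beta$ with $\dot f^{-1}\big(-\frac{\beta+L_z(\theta)}{\lambda}\big)>0$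 on $\operatorname{supp}Q$ and $\int\dot f^{-1}\big(-\frac{\beta+L_z(\theta)}{\lambda}\big)dQ=1$. The algorithm. - $P^{(Q,\lambda)}_{\Theta|Z=z}$ is the unique minimizer of $R_z(P)+\lambda D_f(P\|Q)$ over $\triangle_Q(\mathcal{M})$, with density $\frac{dP^{(Q,\lambda)}_{\Theta|Z=z}}{dQ}(\theta)=\dot f^{-1}\big(-\frac{\beta+L_z(\theta)}{\lambda}\big)$. - $P_Z$ is a probability measure on $(\mathcal{X}\times\mathcal{Y})^n$. - $P^{(Q,\lambda)}_{\Theta|Z}$ is the algorithm $z\mapsto P^{(Q,\lambda)}_{\Theta|Z=z}$. - $P^{(Q,\lambda)}_\Theta(\mathcal{C})=\int P^{(Q,\lambda)}_{\Theta|Z=z}(\mathcal{C})\,dP_Z(z)$. Generalization error. For an algorithm $P_{\Theta|Z}$ with marginal $P_\Theta(\mathcal{C})=\int P_{\Theta|Z=z}(\mathcal{C})dP_Z(z)$, $$\bar{\bar G}(P_{\Theta|Z},P_Z)=\int\!\int\big(R_u(P_{\Theta|Z=z})-R_z(P_{\Theta|Z=z})\big)dP_Z(u)\,dP_Z(z).$$ Further assumptions. - (d) For all $z$, $P_{\Theta|Z=z}\ll P_\Theta$ and $P_\Theta\in\triangle_Q(\mathcal{M})$. - (e) $P_\Theta$ and $Q$ are mutually absolutely continuous. *)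

From HB Require Import structures.
From mathcomp Require Import all_boot all_order all_algebra.
From mathcomp Require Import all_classical all_reals all_analysis.
Set Implicit Arguments. Unset Strict Implicit. Unset Printing Implicit Defensive.
Import Order.TTheory GRing.Theory Num.Theory.
Import numFieldNormedType.Exports.
Local Open Scope classical_set_scope.
Local Open Scope ring_scope.

Definition strictly_convex_on {R : realType} (f : R -> R) (I : set R) : Prop :=
  forall x y t, I x -> I y -> x != y -> 0 < t -> t < 1 ->
    f (t * x + (1 - t) * y) < t * f x + (1 - t) * f y.

Definition fdot {R : realType} (f : R -> R) : R -> R := fun x => derive1 f x.

(* fdot^{-1}: the (unique, by strict convexity) x in (0,oo) with fdot f x = y;
   default value 0 when no such x exists. *)
Definition fdot_inv {R : realType} (f : R -> R) (y : R) : R :=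
  xget 0 [set x | 0 < x /\ fdot f x = y].

Definition emp_risk {R : realType} {X Y Th : Type} {n : nat}
  (h : Th -> X -> Y) (ell : Y -> Y -> R) (z : n.-tuple (X * Y)) (th : Th) : R :=
  n%:R^-1 * \sum_(i < n) ell (h th (tnth z i).1) (tnth z i).2.

Definition risk {R : realType} {d} {Th : measurableType d} {Z : Type}
  (L : Z -> Th -> R) (z : Z) (P : set Th -> \bar R) : \bar R :=
  (\int[P]_th (L z th)%:E)%E.

(* density of the algorithm: dP_{Theta|Z=z}/dQ (theta) = fdot^{-1}(-(beta z + L_z theta)/lambda) *)
Definition gibbs_density {R : realType} {Th Z : Type} (f : R -> R)
  (lam : R) (beta : Z -> R) (L : Z -> Th -> R) (z : Z) (th : Th) : R :=
  fdot_inv f (- (beta z + L z th) / lam).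

Definition gen_error {R : realType} {d dz} {Th : measurableType d}
  {Z : measurableType dz} (L : Z -> Th -> R)
  (P : Z -> set Th -> \bar R) (PZ : set Z -> \bar R) : \bar R :=
  (\int[PZ]_z \int[PZ]_u (risk L u (P z) - risk L z (P z)))%E.

From HB Require Import structures.
From mathcomp Require Import all_boot all_order all_algebra.
From mathcomp Require Import all_classical all_reals all_analysis.
From mathcomp Require Import ring lra measurable_realfun.
Import Order.TTheory GRing.Theory Num.Theory.
Import numFieldNormedType.Exports.
Local Open Scope classical_set_scope.
Local Open Scope ring_scope.

(* On the support of [Q] the density [g_z] of the Gibbs algorithm satisfies
   [fdot f (g_z) = - (beta z + L_z) / lam], so integrating against any [mu << Q]
   gives [int fdot f (g_z) dmu = - beta z / lam - R_z(mu) / lam].  Hence the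
   integrand on the right-hand side is [(R_z(P_Theta) - R_z(P_z)) / lam], the
   constants [beta z] cancelling.  On the left, Fubini and the fact that
   [P_Theta] is the mixture of the [P_z] turn the generalization error into
   [int R_z(P_Theta) dP_Z - int R_z(P_z) dP_Z].
   The convex analysis serves measurability: by a Darboux-type argument the
   superlevel sets of [fdot_inv f] are intervals, so [fdot_inv f] is Borel. *)

Section derive_convex.
Context {R : realType}.

Lemma derive_dirE (f : R -> R) (x v : R) :
  derivable f x 1 -> 'D_v f x = v * 'D_1 f x.
Proof.
move=> /derivable1_diffP dfx; rewrite !deriveE //.
by rewrite -{1}(mulr1 v) -[v * 1]/(v *: (1 : R^o)) linearZ.
Qed.

Lemma tangent_le_convex (f : R -> R) (x t : R) : derivable f x 1 ->
  (forall s, 0 < s < 1 -> f (s * t + (1 - s) * x) <= s * f t + (1 - s) * f x) ->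
  f x + (t - x) * 'D_1 f x <= f t.
Proof.
move=> dfx1 fconv; rewrite addrC -lerBrDr -derive_dirE //.
have dfx : derivable f x (t - x) by apply/diff_derivable/derivable1_diffP.
rewrite [derive _ _ _]cvg_at_rightE //; apply: limr_le.
  rewrite -(cvg_at_rightE (fun h : R => h^-1 *: ((f \o shift x) _ - f x))) //.
  apply: cvg_trans dfx; apply: cvg_app.
  move=> A [e egt0 Ae]; exists e => // y ye ygt0; apply: Ae => //.
  exact/lt0r_neq0.
(* Difference quotients from the right are bounded by the chord slope. *)
near=> h.
have h01 : 0 < h < 1.
  apply/andP; split; first by near: h; exists 1 => /=.
  by near: h; exists 1 => //= y; rewrite /ball_ /= sub0r normrN => /(le_lt_trans (ler_norm _)).
have := fconv h h01.
have -> : h * t + (1 - h) * x = h *: (t - x) + x by rewrite /GRing.scale /=; ring.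
rewrite /= /GRing.scale /= => hconv.
have h0 : 0 < h by case/andP: h01.
rewrite mulrC ler_pdivrMr //; lra.
Unshelve. all: by end_near. Qed.
End derive_convex.

Section fdot_inv.
Context {R : realType} (f : R -> R).

(* [tilted_min y x]: [x] attains the Legendre transform [sup_(t >= 0) (y t - f t)]. *)
Definition tilted_min (y x : R) : Prop :=
  forall t, 0 <= t -> f x - y * x <= f t - y * t.

Lemma fdot_inv_ge0 (y : R) : 0 <= fdot_inv f y.
Proof.
rewrite /fdot_inv; have [[x Px]|N] := pselect (exists x, [set x | 0 < x /\ fdot f x = y] x).
  by have [/ltW] := xgetPex 0 (ex_intro _ x Px).
by rewrite xgetPN // => x Px; apply: N; exists x.
Qed.

Lemma fdot_invK {y : R} : 0 < fdot_inv f y -> fdot f (fdot_inv f y) = y.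
Proof.
rewrite /fdot_inv; have [[x Px]|N] := pselect (exists x, [set x | 0 < x /\ fdot f x = y] x).
  by have [_ ->] := xgetPex 0 (ex_intro _ x Px).
by rewrite xgetPN ?ltxx // => x Px; apply: N; exists x.
Qed.

Hypothesis f_der : forall x, 0 < x -> derivable f x 1.
Hypothesis f_sconv : strictly_convex_on f `[0, +oo[.

Lemma strictly_convexW (a b s : R) : 0 <= a -> 0 <= b -> 0 < s < 1 ->
  f (s * a + (1 - s) * b) <= s * f a + (1 - s) * f b.
Proof.
move=> a0 b0 /andP[s0 s1]; have [->|ab] := eqVneq a b.
  by rewrite -!mulrDl subrKC !mul1r.
by apply/ltW/f_sconv; rewrite //= in_itv /= andbT.
Qed.

Lemma fdot_tangent {x t : R} : 0 < x -> 0 <= t -> f x + (t - x) * fdot f x <= f t.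
Proof.
move=> x0 t0; rewrite /fdot derive1E.
by apply: tangent_le_convex; [exact: f_der | move=> s; apply: strictly_convexW; rewrite // ltW].
Qed.

Lemma tilted_min_fdot {x : R} : 0 < x -> tilted_min (fdot f x) x.
Proof. by move=> x0 t t0; have := fdot_tangent x0 t0; rewrite mulrBl; lra. Qed.

Lemma fdot_tilted_min {x y : R} : 0 < x -> tilted_min y x -> fdot f x = y.
Proof.
move=> x0 xmin; pose k := f - y *: id.
have dk t : 0 < t -> derivable k t 1.
  by move=> t0; apply: derivableB; [exact: f_der | exact/derivableZ/derivable_id].
have x02x : x \in `]0, 2 * x[ by rewrite in_itv /= x0 /=; lra.
have k'0 : is_derive x 1 k 0.
  apply: (derive1_at_min _ _ x02x); first lra.
    by move=> t; rewrite in_itv /= => /andP[t0 _]; exact: dk.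
  by move=> t; rewrite in_itv /= => /andP[t0 _]; exact/xmin/ltW.
have k'E : is_derive x 1 k ('D_1 f x - y *: 1).
  by apply: is_deriveB; exact/derivableP/f_der.
apply/eqP; rewrite /fdot derive1E -subr_eq0 -[y]mulr1.
by rewrite -(derive_val (is_derive := k'E)) (derive_val (is_derive := k'0)).
Qed.

Lemma tilted_min_unique (x1 x2 y : R) : 0 <= x1 -> 0 <= x2 ->
  tilted_min y x1 -> tilted_min y x2 -> x1 = x2.
Proof.
move=> x10 x20 m1 m2; apply/eqP/negPn/negP => x12.
have := @f_sconv x1 x2 (2^-1); rewrite /= !in_itv /= !andbT.
move=> /(_ x10 x20 x12 ltac:(lra) ltac:(lra)).
have := m1 (2^-1 * x1 + (1 - 2^-1) * x2) ltac:(lra).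
have := m2 (2^-1 * x1 + (1 - 2^-1) * x2) ltac:(lra).
lra.
Qed.

Lemma fdotK {x : R} : 0 < x -> fdot_inv f (fdot f x) = x.
Proof.
move=> x0; apply: (xget_unique 0 (conj x0 erefl)) => z [z0 fzx].
apply: (@tilted_min_unique _ _ (fdot f x)); rewrite ?ltW //.
  by rewrite -fzx; exact: tilted_min_fdot.
exact: tilted_min_fdot.
Qed.

Lemma fdot_inv_tilted_min {y : R} : 0 < fdot_inv f y -> tilted_min y (fdot_inv f y).
Proof. by move=> y0; rewrite -{1}(fdot_invK y0); exact: tilted_min_fdot. Qed.

Lemma fdot_inv_le {y1 y2 : R} : y1 < y2 ->
  0 < fdot_inv f y1 -> 0 < fdot_inv f y2 -> fdot_inv f y1 <= fdot_inv f y2.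
Proof.
move=> y12 p1 p2; rewrite leNgt; apply/negP => x21.
have := fdot_inv_tilted_min p1 _ (ltW p2).
have := fdot_inv_tilted_min p2 _ (ltW p1).
have : 0 < (y2 - y1) * (fdot_inv f y1 - fdot_inv f y2) by rewrite mulr_gt0 ?subr_gt0.
lra.
Qed.

Lemma fdot_inv_between {y1 y y2 : R} : y1 < y < y2 ->
  0 < fdot_inv f y1 -> 0 < fdot_inv f y2 -> fdot_inv f y1 <= fdot_inv f y.
Proof.
move=> /andP[y1y yy2] p1 p2.
have m1 := fdot_inv_tilted_min p1; have m2 := fdot_inv_tilted_min p2.
have x12 := fdot_inv_le (lt_trans y1y yy2) p1 p2.
move: p1 p2 m1 m2 x12; set x1 := fdot_inv f y1; set x2 := fdot_inv f y2.
(* A minimiser of [f t - y t] on [x1, x2] is a global one on [0, +oo[,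
   since [x1] and [x2] minimise the tilts by [y1 < y] and [y2 > y]. *)
move=> p1 p2 m1 m2 x12; pose k t := f t - y * t.
have ck : {within `[x1, x2], continuous k}.
  apply: derivable_within_continuous => t; rewrite in_itv /= => /andP[x1t _].
  apply: (@derivableB _ _ _ f (y *: id)); first by apply: f_der; lra.
  exact/derivableZ/derivable_id.
have [c] := EVT_min x12 ck; rewrite in_itv /= => /andP[x1c cx2] cmin.
have kx1 := cmin x1; have kx2 := cmin x2.
rewrite !in_itv /= !lexx x12 /= in kx1 kx2.
have c0 : 0 < c by lra.
suff cmin' : tilted_min y c by rewrite -(fdot_tilted_min c0 cmin') fdotK.
move=> t t0; have [tx1|x1t] := ltP t x1.
  have := m1 t t0; have := kx1 isT; rewrite /k; nra.
have [x2t|tx2] := ltP x2 t.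
  have := m2 t t0; have := kx2 isT; rewrite /k; nra.
by apply: cmin; rewrite in_itv /= x1t tx2.
Qed.

Lemma measurable_fdot_inv : measurable_fun setT (fdot_inv f).
Proof.
apply: (measurability (@RGenOInfty.G R)) => [|/= _ [_] [c] -> <-].
  exact: RGenOInfty.measurableE.
rewrite setTI; have [c0|c0] := ltP c 0.
  rewrite (_ : _ @^-1` _ = setT) //; apply/seteqP; split => // y _ /=.
  by rewrite in_itv /= andbT; exact: lt_le_trans (fdot_inv_ge0 y).
apply: is_interval_measurable => y1 y2 /=; rewrite !in_itv /= !andbT => c1 c2 y.
rewrite !in_itv /= !andbT => /andP[].
rewrite le_eqVlt => /predU1P[<- _ //|y1y]; rewrite le_eqVlt => /predU1P[-> //|yy2].
have y1yy2 : y1 < y < y2 by rewrite y1y.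
by rewrite (lt_le_trans c1 (fdot_inv_between y1yy2 _ _)) // (le_lt_trans c0).
Qed.
End fdot_inv.

Section probability_integral.
Local Open Scope ereal_scope.
Context d (T : measurableType d) (R : realType) (mu : probability T R).

Lemma integral_cst_probability (r : \bar R) : \int[mu]_x r = r.
Proof. by rewrite integral_cst //= probability_setT mule1. Qed.

Lemma integral_cstB (c : R) (F : T -> R) :
  measurable_fun setT F -> (forall x, (0 <= F x)%R) ->
  \int[mu]_x (c - F x)%:E = c%:E - \int[mu]_x (F x)%:E.
Proof.
move=> mF F0; have [iF|] := ltP (\int[mu]_x (F x)%:E) +oo.
  have iF' : mu.-integrable setT (EFin \o F).
    by apply/integrableP; split; [exact/measurable_EFinP|under eq_integral do rewrite /= ger0_norm//].
  rewrite integralB_EFin //; last exact: finite_measure_integrable_cst.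
  by rewrite integral_cst_probability.
rewrite leye_eq => /eqP iF; rewrite iF /= integralE.
(* The positive part of [c - F] is bounded by [|c|], and [F <= (c - F)^- + |c|]. *)
set g := fun x => (c - F x)%:E.
have mg : measurable_fun setT g by exact/measurable_EFinP/measurable_funB.
have pos_fin : \int[mu]_x g^\+ x < +oo.
  apply: (@le_lt_trans _ _ (\int[mu]_x `|c|%:E)); last by rewrite integral_cst_probability ltey.
  apply: ge0_le_integral => //; first exact: measurable_funepos.
  move=> x _; rewrite funeposE ge_max !lee_fin normr_ge0 andbT.
  by rewrite (le_trans _ (ler_norm c)) // gerBl.
suff : +oo <= \int[mu]_x g^\- x + `|c|%:E.
  by move: pos_fin; case: (\int[mu]_x g^\+ x) => // r; case: (\int[mu]_x g^\- x).
rewrite -iF -[X in _ + X]integral_cst_probability -ge0_integralD //; last first.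
  exact: measurable_funeneg.
apply: ge0_le_integral => //.
- by move=> x _; rewrite lee_fin.
- exact/measurable_EFinP.
- by apply: emeasurable_funD => //; exact: measurable_funeneg.
- move=> x _; rewrite funenegE /g -EFinN opprB.
  apply: (@le_trans _ _ ((F x - c)%:E + `|c|%:E)); last by rewrite leeD2r // le_max lexx.
  by rewrite -EFinD lee_fin; have := ler_norm c; lra.
Qed.
End probability_integral.

Section mixture.
Local Open Scope ereal_scope.
Context {d dz} {T : measurableType d} {Z : measurableType dz} {R : realType}.
Context {PZ : probability Z R} {P : Z -> probability T R} {PT : probability T R}.
Hypothesis measurable_P : forall A, measurable A -> measurable_fun setT (fun z => P z A).
Hypothesis PT_mixture : forall A, measurable A -> PT A = \int[PZ]_z P z A.

Import HBNNSimple.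

Lemma sintegral_mixture (h : {nnsfun T >-> R}) :
  sintegral PT h = \int[PZ]_z sintegral (P z) h.
Proof.
under eq_integral do rewrite sintegralE.
rewrite ge0_integral_fsum//; last 2 first.
- by move=> r; apply: measurable_funeM; exact: measurable_P.
- by move=> r z _; exact: nnsfun_mulemu_ge0.
rewrite sintegralE /=; apply: eq_fsbigr => r _.
rewrite integralZl ?PT_mixture //.
apply: le_integrable (finite_measure_integrable_cst PZ 1 measurableT) => //.
  exact: measurable_P.
move=> z _ /=; rewrite normr1 gee0_abs //.
by rewrite (le_trans _ (probability_le1 (P z) measurableT)) // le_measure // inE.
Qed.

Lemma integral_mixture (h : T -> \bar R) :
  measurable_fun setT h -> (forall x, 0 <= h x) ->
  \int[PT]_x h x = \int[PZ]_z \int[P z]_x h x.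
Proof.
move=> mh h0; pose g n x := (nnsfun_approx measurableT mh n x)%:E.
have mg n : measurable_fun setT (g n) by exact/measurable_EFinP.
have g0 n x : 0 <= g n x by rewrite lee_fin.
have nd_g x : {homo g ^~ x : n m / (n <= m)%O >-> n <= m}.
  by move=> n m nm; rewrite lee_fin; exact/lefP/nd_nnsfun_approx.
have hE x : h x = limn (g ^~ x).
  by apply/esym/cvg_lim => //; exact: cvg_nnsfun_approx.
under eq_integral do rewrite hE.
under [RHS]eq_integral do under eq_integral do rewrite hE.
transitivity (limn (fun n => \int[PZ]_z \int[P z]_x g n x)).
  rewrite monotone_convergence //; apply: congr_lim; apply/funext => n.
  rewrite integralT_nnsfun sintegral_mixture.
  by apply: eq_integral => z _; rewrite integralT_nnsfun.
rewrite -monotone_convergence //.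
- by apply: eq_integral => z _; rewrite -monotone_convergence.
- by move=> n; exact: measurable_fun_integral_kernel.
- by move=> n z _; exact: integral_ge0.
- by move=> z _ m n mn; apply: ge0_le_integral => // t _; exact: nd_g.
Qed.

Context {L : Z -> T -> R}.
Hypothesis L_ge0 : forall z t, (0 <= L z t)%R.
Hypothesis measurable_L : measurable_fun setT (fun p : Z * T => L p.1 p.2).

Lemma risk_ge0 (mu : probability T R) z : 0 <= risk L z mu.
Proof. by apply: integral_ge0 => t _; rewrite lee_fin. Qed.

Lemma risk_mixture z : risk L z PT = \int[PZ]_u risk L z (P u).
Proof.
apply: integral_mixture => [|t]; last by rewrite lee_fin.
exact/measurable_EFinP/(measurable_fun_pair2 z measurable_L).
Qed.

Hypothesis int_risk_cross :
  (PZ \x PZ).-integrable setT (fun zu => risk L zu.2 (P zu.1)).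
Hypothesis int_risk : PZ.-integrable setT (fun z => risk L z (P z)).

Let int_risk_fst : (PZ \x PZ).-integrable setT (fun zu => risk L zu.1 (P zu.1)).
Proof.
apply/integrableP; split.
  exact: measurableT_comp (measurable_int _ int_risk) measurable_fst.
under eq_integral do rewrite gee0_abs ?risk_ge0 //.
rewrite fubini_tonelli1 //; last first.
- by move=> zu; exact: risk_ge0.
- exact: measurableT_comp (measurable_int _ int_risk) measurable_fst.
rewrite /fubini_F /=; under eq_integral do rewrite integral_cst_probability.
rewrite (eq_integral (fun z => `|risk L z (P z)|)); first by case/integrableP: int_risk.
by move=> z _; rewrite gee0_abs ?risk_ge0.
Qed.

Let integral_risk_mixture :
  \int[PZ]_u risk L u PT = \int[PZ \x PZ]_zu risk L zu.2 (P zu.1).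
Proof.
rewrite fubini_tonelli2 //; last by move=> zu; exact: risk_ge0.
  by apply: eq_integral => u _; rewrite risk_mixture.
exact: measurable_int int_risk_cross.
Qed.

Lemma integrable_risk_mixture : PZ.-integrable setT (fun z => risk L z PT).
Proof.
have mLE : measurable_fun setT (fun p : Z * T => (L p.1 p.2)%:E).
  exact/measurable_EFinP.
apply/integrableP; split.
  by apply: (measurable_fun_fubini_tonelli_F (m2 := PT) _ mLE) => p; rewrite lee_fin.
under eq_integral do rewrite gee0_abs ?risk_ge0 //.
rewrite integral_risk_mixture.
rewrite (eq_integral (fun zu => `|risk L zu.2 (P zu.1)|)).
  by case/integrableP: int_risk_cross.
by move=> zu _; rewrite gee0_abs ?risk_ge0.
Qed.

Lemma gen_error_mixture : gen_error L (fun z => P z) PZ =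
  \int[PZ]_z risk L z PT - \int[PZ]_z risk L z (P z).
Proof.
have int_diff := integrableB measurableT int_risk_cross int_risk_fst.
rewrite /gen_error; have := integral12_prod_meas1 int_diff; rewrite /fubini_F /= => ->.
rewrite integralB // integral_risk_mixture; congr (_ - _).
rewrite fubini_tonelli1 //.
- by rewrite /fubini_F /=; under eq_integral do rewrite integral_cst_probability.
- exact: measurableT_comp (measurable_int _ int_risk) measurable_fst.
- by move=> zu; exact: risk_ge0.
Qed.
End mixture.

Section affine_diff.
Local Open Scope ereal_scope.
Context d (T : measurableType d) (R : realType) (mu : {measure set T -> \bar R}).

Lemma integral_affine_diff (c : T -> R) (k : R) (a b : T -> \bar R) :
  measurable_fun setT c -> mu.-integrable setT a -> mu.-integrable setT b ->
  \int[mu]_x (((c x)%:E - k%:E * a x) - ((c x)%:E - k%:E * b x)) =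
  k%:E * (\int[mu]_x b x - \int[mu]_x a x).
Proof.
move=> mc ia ib; have iba := integrableB measurableT ib ia.
have ma := measurable_int _ ia; have mb := measurable_int _ ib.
rewrite -integralB // -integralZl //; apply: ae_eq_integral => //.
- have mc' : measurable_fun setT (fun x => (c x)%:E) by exact/measurable_EFinP.
  by apply: emeasurable_funB; apply: emeasurable_funB => //; exact: measurable_funeM.
- by apply: measurable_funeM; exact: measurable_int iba.
apply: filterS2 (integrable_ae measurableT ia) (integrable_ae measurableT ib).
move=> x /(_ Logic.I) + /(_ Logic.I) + _.
case: (a x) => // r; case: (b x) => // s _ _.
by rewrite -!EFinM -!EFinB; congr EFin; ring.
Qed.
End affine_diff.

Lemma emp_risk_ge0 {R : realType} {X Y Th : Type} {n : nat}
  (h : Th -> X -> Y) (ell : Y -> Y -> R) (z : n.-tuple (X * Y)) (th : Th) :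
  (forall y y', 0 <= ell y y') -> 0 <= emp_risk h ell z th.
Proof.
move=> ell_ge0; apply: mulr_ge0; first by rewrite invr_ge0 ler0n.
by apply: sumr_ge0 => i _; exact: ell_ge0.
Qed.

Lemma measurable_emp_risk (R : realType) dM (M : measurableType dM)
  dX dY (X : measurableType dX) (Y : measurableType dY)
  (n : nat) (h : M -> X -> Y) (ell : Y -> Y -> R) :
  measurable_fun setT (fun p => h p.1 p.2) -> measurable_fun setT (fun p => ell p.1 p.2) ->
  measurable_fun setT (fun p : n.-tuple (X * Y) * M => emp_risk h ell p.1 p.2).
Proof.
move=> mh mell; apply: measurable_funM => //; apply: measurable_sum => i.
have mzi : measurable_fun setT (fun p : n.-tuple (X * Y) * M => tnth p.1 i).
  exact: measurableT_comp (measurable_tnth i) measurable_fst.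
apply: (measurableT_comp (f := fun p : Y * Y => ell p.1 p.2)
  (g := fun p => (h p.2 (tnth p.1 i).1, (tnth p.1 i).2))) => //.
apply: measurable_fun_pair.
  apply: (measurableT_comp (f := fun p : M * X => h p.1 p.2)
    (g := fun p => (p.2, (tnth p.1 i).1))) => //.
  apply: measurable_fun_pair => //.
  exact: measurableT_comp measurable_fst mzi.
exact: measurableT_comp measurable_snd mzi.
Qed.

Section gibbs.
Context {R : realType} {dZ dM} {Z : measurableType dZ} {M : measurableType dM}.
Context {Q : probability M R} {lam : R} {f : R -> R} {beta : Z -> R} {L : Z -> M -> R}.
Hypothesis lam_gt0 : 0 < lam.
Hypothesis f_der : forall x, 0 < x -> derivable f x 1.
Hypothesis f_sconv : strictly_convex_on f `[0, +oo[.
Hypothesis measurable_beta : measurable_fun setT beta.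
Hypothesis L_ge0 : forall z th, 0 <= L z th.
Hypothesis measurable_L : measurable_fun setT (fun p : Z * M => L p.1 p.2).

Local Notation g := (gibbs_density f lam beta L).

Lemma measurable_gibbs_density : measurable_fun setT (fun p : Z * M => g p.1 p.2).
Proof.
apply: (measurableT_comp (@measurable_fdot_inv _ f f_der f_sconv)).
apply: measurable_funM => //; apply: measurable_funN => //.
by apply: measurable_funD => //; exact: measurableT_comp measurable_fst.
Qed.

Context {P : Z -> probability M R}.
Hypothesis P_dens : forall z A, measurable A ->
  P z A = (\int[Q]_(th in A) (g z th)%:E)%E.

Lemma measurable_gibbs_posterior A : measurable A -> measurable_fun setT (fun z => P z A).
Proof.
move=> mA; pose k (p : Z * M) := ((g p.1 p.2) * \1_A p.2)%:E.
have -> : (fun z => P z A) = fubini_F Q k.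
  apply/funext => z; rewrite P_dens // integral_mkcond /fubini_F.
  by apply: eq_integral => th _; rewrite /k /patch indicE; case: ifP; rewrite ?mulr1 ?mulr0.
apply: measurable_fun_fubini_tonelli_F.
  apply/measurable_EFinP/measurable_funM; first exact: measurable_gibbs_density.
  by apply: measurableT_comp measurable_snd; exact: measurable_indic.
by move=> p; rewrite lee_fin mulr_ge0 ?fdot_inv_ge0.
Qed.

Lemma measurable_fdot_gibbs z : measurable_fun setT (fun th => fdot f (g z th)).
Proof.
have mgz : measurable_fun setT (g z) := measurable_fun_pair2 z measurable_gibbs_density.
rewrite (_ : (fun th => _) = fun th =>
    if 0 < g z th then - (beta z + L z th) / lam else fdot f 0).
  apply: measurable_fun_ifT => //; first exact: measurable_fun_ltr.
  apply: measurable_funM => //; apply: measurable_funN => //.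
  by apply: measurable_funD => //; exact: measurable_fun_pair2 z measurable_L.
apply/funext => th; case: ifPn => [/(fdot_invK f) -> //|].
rewrite -leNgt => gz0.
by have -> : g z th = 0 by apply/eqP; rewrite eq_le gz0 fdot_inv_ge0.
Qed.

Hypothesis gibbs_pos : forall z, {ae Q, forall th, 0 < g z th}.

Lemma integral_fdot_gibbs (mu : probability M R) z : mu `<< Q ->
  (\int[mu]_th (fdot f (g z th))%:E =
   (- beta z / lam)%:E - (lam^-1)%:E * risk L z mu)%E.
Proof.
move=> muQ; have mLz : measurable_fun setT (L z) := measurable_fun_pair2 z measurable_L.
have fdotE : ae_eq mu setT (fun th => (fdot f (g z th))%:E)
    (fun th => (- beta z / lam - lam^-1 * L z th)%:E).
  apply: null_dominates_ae_eq muQ _ => //; apply: filterS (gibbs_pos z) => th gpos _.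
  by rewrite fdot_invK //; congr EFin; ring.
rewrite (ae_eq_integral _ _ _ _ _ fdotE) //; last 2 first.
- exact/measurable_EFinP/measurable_fdot_gibbs.
- by apply/measurable_EFinP/measurable_funB => //; exact: measurable_funM.
rewrite integral_cstB //; last 2 first.
- exact: measurable_funM.
- by move=> th; rewrite mulr_ge0 ?invr_ge0 ?L_ge0 ?ltW.
under eq_integral do rewrite EFinM.
rewrite ge0_integralZl_EFin ?invr_ge0 ?(ltW lam_gt0) //.
- by move=> th _; rewrite lee_fin.
- exact/measurable_EFinP.
Qed.
End gibbs.

Theorem theorem6 (R : realType)
  (* parameter space M with measurable structure *)
  (dM : measure_display) (M : measurableType dM)
  (* data spaces; datasets are n-tuples in (X * Y) *)
  (dX dY : measure_display) (X : measurableType dX) (Y : measurableType dY)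
  (n : nat)
  (h : M -> X -> Y) (ell : Y -> Y -> R)
  (ell_ge0 : forall y y', 0 <= ell y y')
  (ell_diag : forall y, ell y y = 0)
  (mh : measurable_fun [set: M * X] (fun p => h p.1 p.2))
  (mell : measurable_fun [set: Y * Y] (fun p => ell p.1 p.2))
  (Q : probability M R) (lam : R) (lam_gt0 : 0 < lam)
  (f : R -> R)
  (f1 : f 1 = 0)
  (* (a) f strictly convex on [0,oo) and differentiable on (0,oo) *)
  (f_sconv : strictly_convex_on f `[0, +oo[)
  (f_der : forall x, 0 < x -> derivable f x 1)
  (PZ : probability (n.-tuple (X * Y)) R)
  (beta : n.-tuple (X * Y) -> R)
  (mbeta : measurable_fun [set: n.-tuple (X * Y)] beta)
  (* (b) for every dataset z *)
  (b_pos : forall z, {ae Q, forall th,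
      0 < gibbs_density f lam beta (emp_risk h ell) z th})
  (b_norm : forall z,
      (\int[Q]_th (gibbs_density f lam beta (emp_risk h ell) z th)%:E = 1)%E)
  (* the algorithm P^{(Q,lam)}_{Theta|Z=z}, given by its density w.r.t. Q *)
  (P : n.-tuple (X * Y) -> probability M R)
  (P_dens : forall z A, measurable A ->
      P z A = (\int[Q]_(th in A) (gibbs_density f lam beta (emp_risk h ell) z th)%:E)%E)
  (* its marginal P^{(Q,lam)}_Theta *)
  (PT : probability M R)
  (PT_def : forall A, measurable A -> PT A = (\int[PZ]_z P z A)%E)
  (* (d) *)
  (hd1 : forall z, P z `<< PT)
  (hd2 : PT `<< Q)
  (* (e) *)
  (he : Q `<< PT)
  (* well-definedness (finiteness) of the generalization error *)
  (int1 : (PZ \x PZ)%E.-integrable [set: n.-tuple (X * Y) * n.-tuple (X * Y)]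
            (fun zu => risk (emp_risk h ell) zu.2 (P zu.1)))
  (int2 : PZ.-integrable [set: n.-tuple (X * Y)]
            (fun z => risk (emp_risk h ell) z (P z))) :
  gen_error (emp_risk h ell) (fun z => P z) PZ =
  (lam%:E * \int[PZ]_z
     (\int[P z]_th (fdot f (gibbs_density f lam beta (emp_risk h ell) z th))%:E
      - \int[PT]_th (fdot f (gibbs_density f lam beta (emp_risk h ell) z th))%:E))%E.
Proof.
set L := emp_risk h ell.
have L_ge0 z th : 0 <= L z th by exact: emp_risk_ge0.
have mL : measurable_fun setT (fun p => L p.1 p.2) by exact: measurable_emp_risk.
have mP := measurable_gibbs_posterior f_der f_sconv mbeta mL P_dens.
have fdotE := integral_fdot_gibbs lam_gt0 f_der f_sconv mbeta L_ge0 mL b_pos.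
rewrite (gen_error_mixture mP PT_def L_ge0 mL int1 int2).
under [in RHS]eq_integral => z _.
  rewrite (fdotE _ z (null_dominates_trans (hd1 z) hd2)) (fdotE _ z hd2).
  over.
rewrite integral_affine_diff //.
- by rewrite muleA -EFinM mulfV ?gt_eqF // mul1e.
- by apply: measurable_funM => //; exact: measurable_funN.
- exact: (integrable_risk_mixture mP PT_def L_ge0 mL int1).
Qed.
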